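(* Let $D=I\times[c-b,c+b]$ with $I$ a closed interval and $b>0$, and let $g_{[0]}=g_{[0]ij}du^i\otimes du^j$ be a Riemannian metric on $D$ (the reference state $M_{[0]}$, e.g. induced by a parametrization $\boldsymbol p_{[0]}:D\to\mathbb{E}^3$ of a surface). Let $C$ be the center curve $u^2=c$, let $s_{[0]}(u^1)=\sqrt{g_{[0]11}(u^1,c)}$ be its speed, and let $\kappa_{[0]}(u^1)$ be its geodesic curvature in $(D,g_{[0]})$. Let $\boldsymbol c_{[s]}:I\to\mathbb{R}^2$ be a solution of the ODE $$\ddot{\boldsymbol c}_{[s]}=\begin{pmatrix}\dot s_{[0]}/s_{[0]} & -\kappa_{[0]}s_{[0]}\\ \kappa_{[0]}s_{[0]} & \dot s_{[0]}/s_{[0]}\end{pmatrix}\dot{\boldsymbol c}_{[s]},\qquad \|\dot{\boldsymbol c}_{[s]}\|=s_{[0]},$$ where the dot denotes $d/du^1$, and define $\boldsymbol p_{[s]}:D\to\mathbb{R}^2$ by $$\boldsymbol p_{[s]}(u^1,u^2)=\boldsymbol c_{[s]}(u^1)+\begin{pmatrix}g_{[0]12}(u^1,c) & -\sqrt{\det_{i,j} g_{[0]ij}(u^1,c)}\\ \sqrt{\det_{i,j} g_{[0]ij}(u^1,c)} & g_{[0]12}(u^1,c)\end{pmatrix}\frac{(u^2-c)\,\dot{\boldsymbol c}_{[s]}(u^1)}{g_{[0]11}(u^1,c)},$$ and $M_{[s]}=\{\boldsymbol p_{[s]}(u^1,u^2):(u^1,u^2)\in D\}$. Then $M_{[s]}$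 satisfies: (a-1) the induced metric $g_{[s]ij}=\partial_i\boldsymbol p_{[s]}\cdot\partial_j\boldsymbol p_{[s]}$ coincides with $g_{[0]ij}$ on the center curve, i.e. $g_{[s]ij}(u^1,c)=g_{[0]ij}(u^1,c)$; (a-2) the planar curvature $\kappa_{[s]}$ of the center curve $\boldsymbol c_{[s]}(u^1)=\boldsymbol p_{[s]}(u^1,c)$ equals $\kappa_{[0]}$; (a-3) $\frac{\partial}{\partial u^2}\frac{\partial\boldsymbol p_{[s]}}{\partial u^2}=\boldsymbol 0$.
   Context: For a plane curve $\boldsymbol c$ with speed $s=\|\dot{\boldsymbol c}\|$, set $\boldsymbol e_1=\dot{\boldsymbol c}/s$ and $\boldsymbol e_2=\begin{pmatrix}0&-1\\1&0\end{pmatrix}\boldsymbol e_1$; its planar curvature $\kappa$ is defined by $\dot{\boldsymbol e}_1=s\kappa\boldsymbol e_2$. The geodesic curvature $\kappa_{[0]}$ of the center curve is taken with the sign convention given by the orientation of the coordinates $(u^1,u^2)$ (the unit normal is the one making a positively oriented orthonormal frame with the unit tangent). *)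

From Stdlib Require Import Reals.
From Coquelicot Require Import Coquelicot.
Open Scope R_scope.

(** * Coordinates (u^1,u^2) on R^2; indices are the naturals 1 and 2. *)

Definition pd (k : nat) (f : R -> R -> R) (x y : R) : R :=
  match k with
  | 1%nat => Derive (fun t => f t y) x
  | _ => Derive (fun t => f x t) y
  end.

Definition ex_pd (k : nat) (f : R -> R -> R) (x y : R) : Prop :=
  match k with
  | 1%nat => ex_derive (fun t => f t y) x
  | _ => ex_derive (fun t => f x t) y
  end.

Fixpoint pderivs (l : list nat) (f : R -> R -> R) : R -> R -> R :=
  match l with
  | nil => f
  | cons k l' => pd k (pderivs l' f)
  end.

Definition smooth2 (f : R -> R -> R) : Prop :=
  forall (l : list nat) (x y : R),
    ex_pd 1 (pderivs l f) x y /\ ex_pd 2 (pderivs l f) x y.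

Definition sum2 (F : nat -> R) : R := F 1%nat + F 2%nat.

Definition gcomp (g11 g12 g22 : R -> R -> R) (i j : nat) : R -> R -> R :=
  match i, j with
  | 1%nat, 1%nat => g11
  | 2%nat, 2%nat => g22
  | _, _ => g12
  end.

Definition detg (g11 g12 g22 : R -> R -> R) (x y : R) : R :=
  g11 x y * g22 x y - g12 x y ^ 2.

Definition ginv (g11 g12 g22 : R -> R -> R) (k l : nat) (x y : R) : R :=
  match k, l with
  | 1%nat, 1%nat => g22 x y / detg g11 g12 g22 x y
  | 2%nat, 2%nat => g11 x y / detg g11 g12 g22 x y
  | _, _ => - g12 x y / detg g11 g12 g22 x y
  end.

Definition christoffel (g11 g12 g22 : R -> R -> R) (k i j : nat) (x y : R) : R :=
  / 2 * sum2 (fun l => ginv g11 g12 g22 k l x y *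
     (pd i (gcomp g11 g12 g22 j l) x y + pd j (gcomp g11 g12 g22 i l) x y
      - pd l (gcomp g11 g12 g22 i j) x y)).

Definition gmet (g11 g12 g22 : R -> R -> R) (x y : R) (v w : nat -> R) : R :=
  sum2 (fun i => sum2 (fun j => gcomp g11 g12 g22 i j x y * v i * w j)).

Definition vel (gam : nat -> R -> R) (t : R) : nat -> R :=
  fun k => Derive (gam k) t.

Definition covacc (g11 g12 g22 : R -> R -> R) (gam : nat -> R -> R) (t : R)
  : nat -> R :=
  fun k => Derive (fun s => Derive (gam k) s) t +
    sum2 (fun i => sum2 (fun j =>
      christoffel g11 g12 g22 k i j (gam 1%nat t) (gam 2%nat t)
      * vel gam t i * vel gam t j)).

(** The unit normal n such that (unit tangent, n) is a positively oriented
    (w.r.t. the coordinates (u^1,u^2)) g-orthonormal frame. *)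
Definition unit_normal (g11 g12 g22 : R -> R -> R) (gam : nat -> R -> R) (t : R)
  : nat -> R :=
  let x := gam 1%nat t in let y := gam 2%nat t in
  let v := vel gam t in
  let nrm := sqrt (detg g11 g12 g22 x y) * sqrt (gmet g11 g12 g22 x y v v) in
  fun k => match k with
  | 1%nat => - (g12 x y * v 1%nat + g22 x y * v 2%nat) / nrm
  | _ => (g11 x y * v 1%nat + g12 x y * v 2%nat) / nrm
  end.

Definition geodesic_curvature (g11 g12 g22 : R -> R -> R) (gam : nat -> R -> R)
  (t : R) : R :=
  let x := gam 1%nat t in let y := gam 2%nat t in
  gmet g11 g12 g22 x y (covacc g11 g12 g22 gam t) (unit_normal g11 g12 g22 gam t)
  / gmet g11 g12 g22 x y (vel gam t) (vel gam t).

Definition center_curve (c : R) : nat -> R -> R :=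
  fun k => match k with 1%nat => fun t => t | _ => fun _ => c end.

Definition kappa0 (g11 g12 g22 : R -> R -> R) (c u : R) : R :=
  geodesic_curvature g11 g12 g22 (center_curve c) u.

Definition s0 (g11 : R -> R -> R) (c u : R) : R := sqrt (g11 u c).

Definition pspeed (cx cy : R -> R) (t : R) : R :=
  sqrt (Derive cx t ^ 2 + Derive cy t ^ 2).

(** kappa is the planar curvature at t: s > 0 and  e1' = s kappa e2,
    e1 = c'/s, e2 = J e1 = (- e1_y, e1_x). *)
Definition has_planar_curvature (cx cy : R -> R) (k t : R) : Prop :=
  0 < pspeed cx cy t /\
  is_derive (fun s => Derive cx s / pspeed cx cy s) t
    (pspeed cx cy t * k * (- (Derive cy t / pspeed cx cy t))) /\
  is_derive (fun s => Derive cy s / pspeed cx cy s) t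
    (pspeed cx cy t * k * (Derive cx t / pspeed cx cy t)).

Definition pS (g11 g12 g22 : R -> R -> R) (c : R) (cx cy : R -> R) (m : nat)
  : R -> R -> R :=
  fun u1 u2 =>
  let sd := sqrt (detg g11 g12 g22 u1 c) in
  match m with
  | 1%nat => cx u1 + (g12 u1 c * Derive cx u1 - sd * Derive cy u1) * (u2 - c) / g11 u1 c
  | _ => cy u1 + (sd * Derive cx u1 + g12 u1 c * Derive cy u1) * (u2 - c) / g11 u1 c
  end.

Definition gS (g11 g12 g22 : R -> R -> R) (c : R) (cx cy : R -> R) (i j : nat)
  (u1 u2 : R) : R :=
  sum2 (fun m => pd i (pS g11 g12 g22 c cx cy m) u1 u2 *
                 pd j (pS g11 g12 g22 c cx cy m) u1 u2).

From Stdlib Require Import Reals Lra FunctionalExtensionality.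
From Coquelicot Require Import Coquelicot.
Open Scope R_scope.

(* Along the center curve, p_[s](u^1, c) = c_[s](u^1), so d_1 p = c', while
   d_2 p = R c' / g11 with R = [[g12, -sqrt det], [sqrt det, g12]].  Since
   R^T R = (g12^2 + det) I = g11 g22 I and c' . R c' = g12 |c'|^2, the
   condition |c'|^2 = g11 gives exactly the Gram matrix g_[0] at (u^1, c).
   The ODE for c_[s] splits into a tangential part (s'/s) c', which only
   changes the speed and disappears from the derivative of the unit tangent,
   and a rotational part kappa s J c', which yields e1' = s kappa e2.
   Neither the actual value of kappa_[0] nor the smoothness of g_[0] plays
   a role: the ODE carries all the information needed for (a-2).
   Finally p_[s] is affine in u^2, so its second u^2-derivative vanishes. *)

Lemma gram_rotated_tangent (X Y g11 g12 g22 sd : R) :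
  g11 <> 0 -> X ^ 2 + Y ^ 2 = g11 -> sd ^ 2 = g11 * g22 - g12 ^ 2 ->
  X * ((g12 * X - sd * Y) / g11) + Y * ((sd * X + g12 * Y) / g11) = g12 /\
  ((g12 * X - sd * Y) / g11) ^ 2 + ((sd * X + g12 * Y) / g11) ^ 2 = g22.
Proof.
  intros Hg HXY Hsd; split.
  - replace (X * ((g12 * X - sd * Y) / g11) + Y * ((sd * X + g12 * Y) / g11))
      with (g12 * (X ^ 2 + Y ^ 2) / g11) by (field; exact Hg).
    rewrite HXY; field; exact Hg.
  - replace (((g12 * X - sd * Y) / g11) ^ 2 + ((sd * X + g12 * Y) / g11) ^ 2)
      with ((g12 ^ 2 + sd ^ 2) * (X ^ 2 + Y ^ 2) / g11 ^ 2) by (field; exact Hg).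
    rewrite HXY, Hsd; field; exact Hg.
Qed.

Lemma is_derive_pspeed (cx cy : R -> R) (t : R) :
  ex_derive (Derive cx) t -> ex_derive (Derive cy) t -> 0 < pspeed cx cy t ->
  is_derive (pspeed cx cy) t
    ((Derive cx t * Derive (Derive cx) t + Derive cy t * Derive (Derive cy) t)
     / pspeed cx cy t).
Proof.
  intros Ex Ey Hs.
  assert (Hsq : 0 < Derive cx t ^ 2 + Derive cy t ^ 2).
  { apply sqrt_lt_0_alt; rewrite sqrt_0; exact Hs. }
  assert (Hsum : is_derive (fun u => Derive cx u ^ 2 + Derive cy u ^ 2) t
            (2 * Derive cx t * Derive (Derive cx) t
             + 2 * Derive cy t * Derive (Derive cy) t)).
  { auto_derive; [split; [exact Ex | split; [exact Ey | exact I]] |].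
    change (fun x => Derive cx x) with (Derive cx);
    change (fun x => Derive cy x) with (Derive cy); ring. }
  assert (Hsqrt := is_derive_sqrt _ _ _ Hsum Hsq).
  unfold pspeed in *.
  replace ((Derive cx t * Derive (Derive cx) t + Derive cy t * Derive (Derive cy) t)
           / sqrt (Derive cx t ^ 2 + Derive cy t ^ 2))
    with ((2 * Derive cx t * Derive (Derive cx) t
           + 2 * Derive cy t * Derive (Derive cy) t)
          / (2 * sqrt (Derive cx t ^ 2 + Derive cy t ^ 2))) by (field; lra).
  exact Hsqrt.
Qed.

Lemma has_planar_curvature_of_ode (cx cy : R -> R) (s s' k t : R) :
  ex_derive (Derive cx) t -> ex_derive (Derive cy) t ->
  0 < s -> pspeed cx cy t = s ->
  Derive (Derive cx) t = s' / s * Derive cx t - k * s * Derive cy t ->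
  Derive (Derive cy) t = k * s * Derive cx t + s' / s * Derive cy t ->
  has_planar_curvature cx cy k t.
Proof.
  intros Ex Ey Hs Hsp Ox Oy.
  assert (DP := is_derive_pspeed cx cy t Ex Ey ltac:(lra)).
  assert (DX := Derive_correct _ _ Ex).
  assert (DY := Derive_correct _ _ Ey).
  assert (HXY : Derive cx t ^ 2 + Derive cy t ^ 2 = s ^ 2).
  { rewrite <- Hsp; unfold pspeed; rewrite pow2_sqrt; nra. }
  assert (Hspeed' : Derive cx t * Derive (Derive cx) t
                    + Derive cy t * Derive (Derive cy) t = s' * s).
  { rewrite Ox, Oy.
    replace (Derive cx t * (s' / s * Derive cx t - k * s * Derive cy t)
             + Derive cy t * (k * s * Derive cx t + s' / s * Derive cy t))
      with (s' / s * (Derive cx t ^ 2 + Derive cy t ^ 2)) by (field; lra).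
    rewrite HXY; field; lra. }
  rewrite Hsp, Hspeed' in DP.
  unfold has_planar_curvature; rewrite Hsp.
  split; [exact Hs | split].
  - assert (H := is_derive_div _ _ _ _ _ DX DP ltac:(rewrite Hsp; lra)).
    rewrite Hsp, Ox in H.
    replace (s * k * - (Derive cy t / s)) with
      (((s' / s * Derive cx t - k * s * Derive cy t) * s
        - Derive cx t * (s' * s / s)) / s ^ 2) by (field; lra).
    exact H.
  - assert (H := is_derive_div _ _ _ _ _ DY DP ltac:(rewrite Hsp; lra)).
    rewrite Hsp, Oy in H.
    replace (s * k * (Derive cx t / s)) with
      (((k * s * Derive cx t + s' / s * Derive cy t) * s
        - Derive cy t * (s' * s / s)) / s ^ 2) by (field; lra).
    exact H.
Qed.

Section ParallelMap.

Variables (g11 g12 g22 : R -> R -> R) (c : R) (cx cy : R -> R).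

Definition plane_comp (m : nat) : R -> R :=
  match m with 1%nat => cx | _ => cy end.

(* The entries of R c' / g11, i.e. the (constant) u^2-velocity of p_[s]. *)
Definition transversal (m : nat) (u1 : R) : R :=
  let sd := sqrt (detg g11 g12 g22 u1 c) in
  match m with
  | 1%nat => (g12 u1 c * Derive cx u1 - sd * Derive cy u1) / g11 u1 c
  | _ => (sd * Derive cx u1 + g12 u1 c * Derive cy u1) / g11 u1 c
  end.

Lemma pS_center (m : nat) :
  (fun t => pS g11 g12 g22 c cx cy m t c) = plane_comp m.
Proof.
  apply functional_extensionality; intro t.
  unfold pS, plane_comp; replace (c - c) with 0 by ring.
  destruct m as [|[|m]]; unfold Rdiv; ring.
Qed.

Lemma pd1_pS_center (m : nat) (u1 : R) :
  pd 1 (pS g11 g12 g22 c cx cy m) u1 c = Derive (plane_comp m) u1.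
Proof.
  change (Derive (fun t => pS g11 g12 g22 c cx cy m t c) u1 = Derive (plane_comp m) u1).
  now rewrite pS_center.
Qed.

Lemma ex_pd1_pS_center (m : nat) (u1 : R) :
  ex_derive (plane_comp m) u1 -> ex_pd 1 (pS g11 g12 g22 c cx cy m) u1 c.
Proof.
  change (ex_derive (plane_comp m) u1 -> ex_derive (fun t => pS g11 g12 g22 c cx cy m t c) u1).
  now rewrite pS_center.
Qed.

Lemma is_derive_pS_u2 (m : nat) (u1 u2 : R) :
  is_derive (fun t => pS g11 g12 g22 c cx cy m u1 t) u2 (transversal m u1).
Proof.
  assert (Haffine : forall A B G : R,
             is_derive (fun t => A + B * (t - c) / G) u2 (B / G)).
  { intros A B G; unfold Rdiv; auto_derive; [exact I | ring]. }
  destruct m as [|[|m]]; apply Haffine.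
Qed.

Lemma pd2_pS (m : nat) (u1 u2 : R) :
  pd 2 (pS g11 g12 g22 c cx cy m) u1 u2 = transversal m u1.
Proof. exact (is_derive_unique _ _ _ (is_derive_pS_u2 m u1 u2)). Qed.

Lemma is_derive_pd2_pS_u2 (m : nat) (u1 u2 : R) :
  is_derive (fun t => pd 2 (pS g11 g12 g22 c cx cy m) u1 t) u2 0.
Proof.
  apply (is_derive_ext (fun _ => transversal m u1)); [intro t; now rewrite pd2_pS|].
  auto_derive; [exact I | reflexivity].
Qed.

Lemma gS_center (u1 : R) :
  0 < g11 u1 c -> 0 <= detg g11 g12 g22 u1 c ->
  pspeed cx cy u1 = sqrt (g11 u1 c) ->
  forall i j, (i = 1%nat \/ i = 2%nat) -> (j = 1%nat \/ j = 2%nat) ->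
  gS g11 g12 g22 c cx cy i j u1 c = gcomp g11 g12 g22 i j u1 c.
Proof.
  intros Hg Hdet Hsp.
  assert (HXY : Derive cx u1 ^ 2 + Derive cy u1 ^ 2 = g11 u1 c).
  { unfold pspeed in Hsp; apply sqrt_inj; [apply Rplus_le_le_0_compat; apply pow2_ge_0 | lra | exact Hsp]. }
  assert (Hsd : sqrt (detg g11 g12 g22 u1 c) ^ 2 = g11 u1 c * g22 u1 c - g12 u1 c ^ 2)
    by (rewrite pow2_sqrt by exact Hdet; reflexivity).
  destruct (gram_rotated_tangent _ _ _ _ _ _ (Rgt_not_eq _ _ Hg) HXY Hsd) as [G12 G22].
  intros i j [-> | ->] [-> | ->]; unfold gS, sum2;
    rewrite ?pd1_pS_center, ?pd2_pS; simpl; unfold transversal.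
  all: nra.
Qed.

End ParallelMap.

Theorem mainTheorem3 (a1 a2 b c : R) (g11 g12 g22 : R -> R -> R) (cx cy : R -> R) :
  0 < b ->
  smooth2 g11 -> smooth2 g12 -> smooth2 g22 ->
  (forall u1 u2, a1 <= u1 <= a2 -> c - b <= u2 <= c + b ->
     0 < g11 u1 u2 /\ 0 < detg g11 g12 g22 u1 u2) ->
  (forall u, a1 <= u <= a2 ->
     ex_derive cx u /\ ex_derive cy u /\
     ex_derive (Derive cx) u /\ ex_derive (Derive cy) u) ->
  (forall u, a1 <= u <= a2 ->
     Derive (Derive cx) u =
       Derive (s0 g11 c) u / s0 g11 c u * Derive cx u
       - kappa0 g11 g12 g22 c u * s0 g11 c u * Derive cy u /\
     Derive (Derive cy) u =
       kappa0 g11 g12 g22 c u * s0 g11 c u * Derive cx u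
       + Derive (s0 g11 c) u / s0 g11 c u * Derive cy u) ->
  (forall u, a1 <= u <= a2 -> pspeed cx cy u = s0 g11 c u) ->
  (* (a-1) *)
  (forall u1, a1 <= u1 <= a2 ->
     (forall i m, (i = 1%nat \/ i = 2%nat) -> (m = 1%nat \/ m = 2%nat) ->
        ex_pd i (pS g11 g12 g22 c cx cy m) u1 c) /\
     (forall i j, (i = 1%nat \/ i = 2%nat) -> (j = 1%nat \/ j = 2%nat) ->
        gS g11 g12 g22 c cx cy i j u1 c = gcomp g11 g12 g22 i j u1 c)) /\
  (* (a-2) *)
  (forall u1, a1 <= u1 <= a2 ->
     has_planar_curvature (fun t => pS g11 g12 g22 c cx cy 1 t c)
                          (fun t => pS g11 g12 g22 c cx cy 2 t c)
                          (kappa0 g11 g12 g22 c u1) u1) /\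
  (* (a-3) *)
  (forall u1 u2, a1 <= u1 <= a2 -> c - b <= u2 <= c + b ->
     forall m, (m = 1%nat \/ m = 2%nat) ->
       ex_pd 2 (pS g11 g12 g22 c cx cy m) u1 u2 /\
       ex_pd 2 (pd 2 (pS g11 g12 g22 c cx cy m)) u1 u2 /\
       pd 2 (pd 2 (pS g11 g12 g22 c cx cy m)) u1 u2 = 0).
Proof.
  intros Hb _ _ _ Hpos Hex Hode Hsp.
  assert (Hc : c - b <= c <= c + b) by lra.
  split; [|split].
  - intros u1 Hu.
    destruct (Hpos u1 c Hu Hc) as [Hg Hdet], (Hex u1 Hu) as [Ex [Ey _]].
    split; [|apply gS_center; [exact Hg | lra | exact (Hsp u1 Hu)]].
    intros i m [-> | ->] Hm.
    + apply ex_pd1_pS_center; destruct Hm as [-> | ->]; assumption.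
    + eexists; apply is_derive_pS_u2.
  - intros u1 Hu.
    rewrite (pS_center g11 g12 g22 c cx cy 1), (pS_center g11 g12 g22 c cx cy 2).
    destruct (Hpos u1 c Hu Hc) as [Hg _], (Hex u1 Hu) as [_ [_ [Exx Eyy]]].
    destruct (Hode u1 Hu) as [Ox Oy].
    apply (has_planar_curvature_of_ode _ _ (s0 g11 c u1) (Derive (s0 g11 c) u1));
      [exact Exx | exact Eyy | apply sqrt_lt_R0, Hg | exact (Hsp u1 Hu) | exact Ox | exact Oy].
  - intros u1 u2 _ _ m _.
    split; [|split].
    + eexists; apply is_derive_pS_u2.
    + eexists; apply is_derive_pd2_pS_u2.
    + exact (is_derive_unique _ _ _ (is_derive_pd2_pS_u2 g11 g12 g22 c cx cy m u1 u2)).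
Qed.
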